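(* Let $m,n\in\mathbb{N}$, $R>0$ and $\varepsilon\in\mathbb{R}$ with $|\varepsilon|\ll_{m,n}R^{-1}$. Let $\xi:=(1+\varepsilon u)(1-\varepsilon v)$ and define $\bar\Phi:\mathfrak{D}\cap\{r<R\}\to\mathfrak{D}$ in null coordinates by \[ \bar\Phi(u,v,\omega_x,\omega_t):=\big(u(1+\varepsilon u)^{-1},\ v(1-\varepsilon v)^{-1},\ \omega_x,\ \omega_t\big). \] Then $\tau\circ\bar\Phi=\xi^{-1}\tau$, $f\circ\bar\Phi=\xi^{-1}f$, $\bar\rho\circ\bar\Phi=\xi^{-1}r$, and $\bar\Phi$ is a conformal isometry between $\mathfrak{D}\cap\{r<R\}$ and an open subset of $\mathfrak{D}$; specifically, the pull-back satisfies $\bar\Phi^*\bar g=\xi^{-2}g$ on $\mathfrak{D}\cap\{r<R\}$.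
   Context: On $\mathbb{R}^{m+n}$ with Cartesian coordinates $t\in\mathbb{R}^m$, $x\in\mathbb{R}^n$: $g=-\sum dt_i^2+\sum dx_j^2$, $r=|x|$, $\tau=|t|$, $u=\frac12(\tau-r)$, $v=\frac12(\tau+r)$, $f=-uv=\frac14(|x|^2-|t|^2)$, $\mathfrak{D}=\{f>0\}$; null coordinates $(u,v,\omega_x,\omega_t)$ with $\omega_x=x/|x|\in\mathbb{S}^{n-1}$, $\omega_t=t/|t|\in\mathbb{S}^{m-1}$, in which $g=-4\,du\,dv+r^2\mathring\gamma_{\mathbb{S}^{n-1}}-\tau^2\mathring\gamma_{\mathbb{S}^{m-1}}$. The warped radius is $\bar\rho=r+2\varepsilon f$ and the $\varepsilon$-warped metric is $\bar g=-4\,du\,dv+\bar\rho^2\mathring\gamma_{\mathbb{S}^{n-1}}-\tau^2\mathring\gamma_{\mathbb{S}^{m-1}}$. The notation $|\varepsilon|\ll_{m,n}R^{-1}$ means $|\varepsilon|\le cR^{-1}$ for a sufficiently small constant $c$ depending on $m,n$. *)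

From HB Require Import structures.
From mathcomp Require Import all_boot all_order all_algebra.
From mathcomp Require Import all_classical all_reals all_analysis.
Set Implicit Arguments. Unset Strict Implicit. Unset Printing Implicit Defensive.
Import Order.TTheory GRing.Theory Num.Theory.
Import numFieldNormedType.Exports.
Local Open Scope classical_set_scope.
Local Open Scope ring_scope.

(* Points of R^{m+n} are row vectors p : 'rV[R]_(m+n); the first m coordinates
   are t, the last n coordinates are x. *)
Section Defs.
Variables (R : realType) (m n : nat).
Implicit Types (p w : 'rV[R]_(m + n)) (eps : R).

Definition dotv k (a b : 'rV[R]_k) : R := \sum_(i < k) a 0 i * b 0 i.
Definition sqn k (a : 'rV[R]_k) : R := dotv a a.

Definition tpart p : 'rV[R]_m := lsubmx p.
Definition xpart p : 'rV[R]_n := rsubmx p.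

Definition rr p : R := Num.sqrt (sqn (xpart p)).
Definition tau p : R := Num.sqrt (sqn (tpart p)).
Definition uu p : R := (tau p - rr p) / 2.
Definition vv p : R := (tau p + rr p) / 2.
Definition ff p : R := - (uu p * vv p).
Definition Dom : set 'rV[R]_(m + n) := [set p | 0 < ff p].

Definition rhobar eps p : R := rr p + 2 * eps * ff p.
Definition xi eps p : R := (1 + eps * uu p) * (1 - eps * vv p).

(* The map bar Phi, defined in null coordinates:
   (u,v,omega_x,omega_t) |-> (u/(1+eps u), v/(1-eps v), omega_x, omega_t),
   translated back to Cartesian coordinates via t = (u+v) omega_t,
   x = (v-u) omega_x, omega_t = t/|t|, omega_x = x/|x|.
   (When t = 0 the new t-component u'+v' vanishes as well, and we keep t = 0.) *)
Definition Phibar eps p : 'rV[R]_(m + n) :=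
  let u' := uu p / (1 + eps * uu p) in
  let v' := vv p / (1 - eps * vv p) in
  row_mx (if tau p == 0 then tpart p else ((u' + v') / tau p) *: tpart p)
         (((v' - u') / rr p) *: xpart p).

Definition gmink (p w1 w2 : 'rV[R]_(m + n)) : R :=
  - dotv (tpart w1) (tpart w2) + dotv (xpart w1) (xpart w2).

Definition dtau p w : R :=
  if tau p == 0 then 0 else dotv (tpart p) (tpart w) / tau p.
Definition dr p w : R := dotv (xpart p) (xpart w) / rr p.
Definition du p w : R := (dtau p w - dr p w) / 2.
Definition dv p w : R := (dtau p w + dr p w) / 2.

(* round metric of S^{n-1} pulled back by omega_x = x/|x| *)
Definition gamma_x p (w1 w2 : 'rV[R]_(m + n)) : R :=
  (dotv (xpart w1) (xpart w2) - dr p w1 * dr p w2) / rr p ^+ 2.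
(* tau^2 times the round metric of S^{m-1} pulled back by omega_t = t/|t|
   (this product extends smoothly to t = 0) *)
Definition tau2_gamma_t p (w1 w2 : 'rV[R]_(m + n)) : R :=
  dotv (tpart w1) (tpart w2) - dtau p w1 * dtau p w2.

(* warped metric  gbar = -4 du dv + rhobar^2 gamma_{S^{n-1}} - tau^2 gamma_{S^{m-1}}
   (symmetrized bilinear form) *)
Definition gbar eps p (w1 w2 : 'rV[R]_(m + n)) : R :=
  - 2 * (du p w1 * dv p w2 + dv p w1 * du p w2)
  + rhobar eps p ^+ 2 * gamma_x p w1 w2 - tau2_gamma_t p w1 w2.

End Defs.

(* In null coordinates Phibar is the pair of Moebius maps u |-> u / (1 + eps u),
   v |-> v / (1 - eps v), whose differentials are du / (1 + eps u)^2 and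
   dv / (1 - eps v)^2, so the null part -4 du dv of the metric is multiplied by
   xi^-2.  In Cartesian coordinates Phibar is a radial map (t, x) |-> (a t, b x)
   with a = 1/xi and b = (r - 2 eps f) / (xi r); such a map changes the angular
   parts only through the radii, and tau o Phibar = tau / xi, rhobar o Phibar = r / xi.  The map Phibar_{-eps} inverts Phibar_eps, which
   gives injectivity and exhibits the image as an open set.  The bound
   |eps| r <= 1/4 keeps every denominator positive. *)

From HB Require Import structures.
From mathcomp Require Import all_boot all_order all_algebra.
From mathcomp Require Import all_classical all_reals all_analysis.
From mathcomp Require Import lra ring.
Set Implicit Arguments. Unset Strict Implicit. Unset Printing Implicit Defensive.
Import Order.TTheory GRing.Theory Num.Theory.
Import numFieldNormedType.Exports.
Local Open Scope classical_set_scope.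
Local Open Scope ring_scope.

Section Differentiation.
Variable R : realType.

Lemma is_diff_sum (U W : normedModType R) k (f df : 'I_k -> U -> W) x :
  (forall i, is_diff x (f i) (df i)) -> is_diff x (\sum_i f i) (\sum_i df i).
Proof.
move=> h; elim/big_rec2: _ => [|i g dg _ ?]; first exact: is_diff_cst.
exact: is_diffD.
Qed.

Lemma is_diffV (U : normedModType R) (f df : U -> R) x :
  is_diff x f df -> f x != 0 ->
  is_diff x (fun y => (f y)^-1) (fun w => - (f x ^- 2) * df w).
Proof.
move=> hf hx; apply: DiffDef; first exact: differentiableV.
by rewrite diffV // diff_val.
Qed.

Lemma is_diff_div (U : normedModType R) (f g df dg : U -> R) x :
  is_diff x f df -> is_diff x g dg -> g x != 0 ->
  is_diff x (fun y => f y / g y) (fun w => (df w * g x - f x * dg w) / g x ^+ 2).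
Proof.
move=> hf hg g0.
have H : is_diff x (fun y => f y / g y)
                   (fun w => f x * (- (g x ^- 2) * dg w) + (g x)^-1 * df w) :=
  is_diffM hf (is_diffV hg g0).
by apply: is_diff_eq H _; apply/funext => w; field.
Qed.

Lemma is_diff_linear (U W : normedModType R) (f : {linear U -> W}) x :
  continuous f -> is_diff x f f.
Proof.
by move=> fc; apply: DiffDef; [exact: linear_differentiable | rewrite diff_lin].
Qed.

Lemma is_diff_sqrt (a : R) : 0 < a ->
  is_diff a (@Num.sqrt R) (fun h => h / (2 * Num.sqrt a)).
Proof.
move=> ha; have hd := is_derive1_sqrt ha.
have da : derivable (@Num.sqrt R) a 1 by exact: ex_derive.
apply: DiffDef; first exact/derivable1_diffP.
by rewrite deriv1E // derive1E derive_val.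
Qed.

Lemma near_eq_is_diff (U W : normedModType R) (f g dg : U -> W) x :
  (\forall y \near x, f y = g y) -> is_diff x g dg -> is_diff x f dg.
Proof.
move=> fg hg; have dgx : differentiable g x by [].
have fx : f x = g x := nbhs_singleton fg.
have key : f \o shift x = cst (f x) + 'd g x +o_ 0 id.
  apply/eqaddoP => eps heps; have /eqaddoP H := diff_locally dgx.
  have fg0 : \forall h \near 0, f (h + x) = g (h + x).
    by move: fg; rewrite (near_shift 0) subr0.
  apply: filterS2 fg0 (H eps heps) => h E1 E2.
  suff -> : (f \o shift x - (cst (f x) + 'd g x)) h =
            (g \o shift x - (cst (g x) + 'd g x)) h by exact: E2.
  by change (f (h + x) - (f x + 'd g x h) = g (h + x) - (g x + 'd g x h));
    rewrite E1 fx.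
have hd : 'd f x = 'd g x :> (U -> W).
  by apply: diff_unique => //; exact: diff_continuous.
apply: DiffDef; last by rewrite hd diff_val.
by apply/diff_locallyP; rewrite hd; split => //; exact: diff_continuous.
Qed.

Lemma open_pos (T : topologicalType) (f : T -> R) :
  continuous f -> open [set x | 0 < f x].
Proof.
by move=> fc; have := @open_comp _ _ f _ (fun x _ => fc x) (@open_gt R 0).
Qed.

Lemma open_setI_preimage (T U : topologicalType) (A : set T) (B : set U) (f : T -> U) :
  open A -> open B -> {in A, continuous f} -> open (A `&` f @^-1` B).
Proof.
move=> oA oB fc; rewrite openE => x [Ax Bx]; apply: filterI.
  exact: open_nbhs_nbhs.
by apply: (fc x); [rewrite inE | exact: open_nbhs_nbhs].
Qed.

Section Matrices.
Variables (U : normedModType R) (a b : nat).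
Implicit Types (F dF : U -> 'M[R]_(a, b)) (x : U).

Lemma is_diff_mxcoord F dF x i j :
  is_diff x F dF -> is_diff x (fun y => F y i j) (fun w => dF w i j).
Proof.
move=> hF; have lin : linear (fun N : 'M[R]_(a, b) => N i j).
  by move=> k A B; rewrite !mxE.
pose c : {linear 'M[R]_(a, b) -> R} :=
  HB.pack (fun N : 'M[R]_(a, b) => N i j) (GRing.isLinear.Build _ _ _ _ _ lin).
have hc : continuous c := @coord_continuous R a b i j.
by have := is_diff_comp hF (is_diff_linear (F x) hc).
Qed.

Lemma is_diff_mxcoordP F dF x :
  (forall i j, is_diff x (fun y => F y i j) (fun w => dF w i j)) -> is_diff x F dF.
Proof.
move=> h; have eF (G : U -> 'M[R]_(a, b)) :
    \sum_i \sum_j (fun y => G y i j *: delta_mx i j) = G.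
  apply/funext => y; rewrite [RHS]matrix_sum_delta !fct_sumE.
  by apply: eq_bigr => i _; rewrite fct_sumE.
rewrite -(eF F) -(eF dF); apply: is_diff_sum => i; apply: is_diff_sum => j.
by apply: DiffDef; [exact/differentiableZl | rewrite diffZl // diff_val].
Qed.

Lemma is_diff_scalemx (k dk : U -> R) F dF x :
  is_diff x k dk -> is_diff x F dF ->
  is_diff x (fun y => k y *: F y) (fun w => dk w *: F x + k x *: dF w).
Proof.
move=> hk hF; apply: is_diff_mxcoordP => i j.
rewrite (_ : (fun y => _) = k * (fun y => F y i j)); last first.
  by apply/funext => y; rewrite /= mxE.
apply: is_diff_eq (is_diffM hk (is_diff_mxcoord i j hF)) _.
apply/funext => w; rewrite /= !mxE.
by change (k x * dF w i j + F x i j * dk w = dk w * F x i j + k x * dF w i j);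
  rewrite addrC mulrC.
Qed.

End Matrices.

Lemma is_diff_row_mx (U : normedModType R) k l1 l2
    (F dF : U -> 'M[R]_(k, l1)) (G dG : U -> 'M[R]_(k, l2)) x :
  is_diff x F dF -> is_diff x G dG ->
  is_diff x (fun y => row_mx (F y) (G y)) (fun w => row_mx (dF w) (dG w)).
Proof.
move=> hF hG; apply: is_diff_mxcoordP => i j.
case: (split_ordP j) => j' ->.
- have eL (H : U -> 'M[R]_(k, l1)) (K : U -> 'M[R]_(k, l2)) :
      (fun y => row_mx (H y) (K y) i (lshift l2 j')) = fun y => H y i j'.
    by apply/funext => y; rewrite row_mxEl.
  by rewrite !eL; exact: is_diff_mxcoord.
- have eR (H : U -> 'M[R]_(k, l1)) (K : U -> 'M[R]_(k, l2)) :
      (fun y => row_mx (H y) (K y) i (rshift l1 j')) = fun y => K y i j'.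
    by apply/funext => y; rewrite row_mxEr.
  by rewrite !eR; exact: is_diff_mxcoord.
Qed.

End Differentiation.

Section DotProduct.
Variables (R : realType) (k : nat).
Implicit Types (a b c : 'rV[R]_k) (s : R).

Lemma dotvC a b : dotv a b = dotv b a.
Proof. by apply: eq_bigr => i _; rewrite mulrC. Qed.

Lemma dotvDl a b c : dotv (a + b) c = dotv a c + dotv b c.
Proof. by rewrite /dotv -big_split; apply: eq_bigr => i _; rewrite mxE mulrDl. Qed.

Lemma dotvZl s a b : dotv (s *: a) b = s * dotv a b.
Proof. by rewrite /dotv mulr_sumr; apply: eq_bigr => i _; rewrite mxE mulrA. Qed.

Lemma dotvDr a b c : dotv a (b + c) = dotv a b + dotv a c.
Proof. by rewrite dotvC dotvDl !(dotvC a). Qed.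

Lemma dotvZr s a b : dotv a (s *: b) = s * dotv a b.
Proof. by rewrite dotvC dotvZl dotvC. Qed.

Lemma dotv0l b : dotv 0 b = 0.
Proof. by rewrite -(scale0r 0) dotvZl mul0r. Qed.

Lemma sqn_ge0 a : 0 <= sqn a.
Proof. by apply: sumr_ge0 => i _; rewrite -expr2 sqr_ge0. Qed.

Lemma sqn_eq0 a : (sqn a == 0) = (a == 0).
Proof.
apply/eqP/eqP => [|->]; last by rewrite /sqn dotv0l.
move=> s0; apply/rowP => i; rewrite mxE.
have /eqP : a 0 i * a 0 i = 0.
  by apply: (psumr_eq0P _ s0) => // j _; rewrite -expr2 sqr_ge0.
by rewrite mulf_eq0 orbb => /eqP.
Qed.

Lemma sqnZ s a : sqn (s *: a) = s ^+ 2 * sqn a.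
Proof. by rewrite /sqn dotvZl dotvZr mulrA. Qed.

Lemma dotv_lincomb s1 s2 t1 t2 a b c :
  dotv (s1 *: a + t1 *: b) (s2 *: a + t2 *: c) =
  s1 * s2 * sqn a + s1 * t2 * dotv a c + t1 * s2 * dotv a b + t1 * t2 * dotv b c.
Proof. by rewrite !dotvDl !dotvDr !dotvZl !dotvZr /sqn (dotvC b a); ring. Qed.

Lemma is_diff_sqn (U : normedModType R) (F dF : U -> 'rV[R]_k) x :
  is_diff x F dF -> is_diff x (fun y => sqn (F y)) (fun w => 2 * dotv (F x) (dF w)).
Proof.
move=> hF; rewrite /sqn /dotv -fct_sumE.
have hc i := is_diff_mxcoord 0 i hF.
apply: is_diff_eq (is_diff_sum (fun i => is_diffM (hc i) (hc i))) _.
apply/funext => w; rewrite fct_sumE mulr_sumr; apply: eq_bigr => i _.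
by change (F x 0 i * dF w 0 i + F x 0 i * dF w 0 i = 2 * (F x 0 i * dF w 0 i)); ring.
Qed.

End DotProduct.

Section NullCoordinates.
Variables (R : realType) (m n : nat).
Local Notation V := 'rV[R]_(m + n).
Implicit Types (p w : V).

Definition dff p w := - (vv p * du p w + uu p * dv p w).

Lemma tau_ge0 p : 0 <= tau p. Proof. exact: sqrtr_ge0. Qed.
Lemma rr_ge0 p : 0 <= rr p. Proof. exact: sqrtr_ge0. Qed.

Lemma tau_eq0 p : (tau p == 0) = (tpart p == 0).
Proof. by rewrite sqrtr_eq0 -sqn_eq0 eq_le sqn_ge0 andbT. Qed.

Lemma rr_eq0 p : (rr p == 0) = (xpart p == 0).
Proof. by rewrite sqrtr_eq0 -sqn_eq0 eq_le sqn_ge0 andbT. Qed.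

Lemma tau_sqr p : tau p ^+ 2 = sqn (tpart p).
Proof. by rewrite sqr_sqrtr // sqn_ge0. Qed.

Lemma rr_sqr p : rr p ^+ 2 = sqn (xpart p).
Proof. by rewrite sqr_sqrtr // sqn_ge0. Qed.

Lemma tauE p : tau p = uu p + vv p. Proof. by rewrite /uu /vv; field. Qed.
Lemma rrE p : rr p = vv p - uu p. Proof. by rewrite /uu /vv; field. Qed.
Lemma dtauE p w : dtau p w = du p w + dv p w. Proof. by rewrite /du /dv; field. Qed.
Lemma drE p w : dr p w = dv p w - du p w. Proof. by rewrite /du /dv; field. Qed.

(* This also holds at t = 0, where dtau is set to 0 and tpart p vanishes. *)
Lemma dotv_tpart p w : dotv (tpart p) (tpart w) = tau p * dtau p w.
Proof.
rewrite /dtau; have [t0|t0] := eqVneq (tau p) 0.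
  by move/eqP: (t0); rewrite tau_eq0 => /eqP ->; rewrite dotv0l t0 mul0r.
by rewrite mulrCA divff // mulr1.
Qed.

Lemma dotv_xpart p w : dotv (xpart p) (xpart w) = rr p * dr p w.
Proof.
rewrite /dr; have [r0|r0] := eqVneq (rr p) 0.
  by move/eqP: (r0); rewrite rr_eq0 => /eqP ->; rewrite dotv0l r0 mul0r.
by rewrite mulrCA divff // mulr1.
Qed.

Lemma Dom_uv p : Dom p -> uu p < 0 < vv p.
Proof.
rewrite /Dom /ff /= => fp; have := tau_ge0 p; have := rr_ge0 p.
by rewrite tauE rrE; move: (uu p) (vv p) fp => u v *; apply/andP; split; nra.
Qed.

Lemma is_diff_tpart p : is_diff p (@tpart R m n) (@tpart R m n).
Proof.
have := @is_diff_linear R _ _ (@lsubmx R 1 m n) p (@continuous_lsubmx R 1 m n).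
exact.
Qed.

Lemma is_diff_xpart p : is_diff p (@xpart R m n) (@xpart R m n).
Proof.
have := @is_diff_linear R _ _ (@rsubmx R 1 m n) p (@continuous_rsubmx R 1 m n).
exact.
Qed.

Lemma continuous_tau : continuous (@tau R m n).
Proof.
move=> p; rewrite (_ : @tau R m n = Num.sqrt \o (fun y => sqn (tpart y))) //.
apply: continuous_comp; last exact: sqrt_continuous.
by have [+ _] := is_diff_sqn (is_diff_tpart p); exact: differentiable_continuous.
Qed.

Lemma continuous_rr : continuous (@rr R m n).
Proof.
move=> p; rewrite (_ : @rr R m n = Num.sqrt \o (fun y => sqn (xpart y))) //.
apply: continuous_comp; last exact: sqrt_continuous.
by have [+ _] := is_diff_sqn (is_diff_xpart p); exact: differentiable_continuous.
Qed.

Lemma continuous_uu : continuous (@uu R m n).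
Proof.
rewrite (_ : @uu R m n = (@tau R m n - @rr R m n) \* cst 2^-1) // => p.
apply: continuousM; last exact: cst_continuous.
by apply: continuousB; [exact: continuous_tau | exact: continuous_rr].
Qed.

Lemma continuous_vv : continuous (@vv R m n).
Proof.
rewrite (_ : @vv R m n = (@tau R m n + @rr R m n) \* cst 2^-1) // => p.
apply: continuousM; last exact: cst_continuous.
by apply: continuousD; [exact: continuous_tau | exact: continuous_rr].
Qed.

Lemma is_diff_rr p : 0 < rr p -> is_diff p (@rr R m n) (dr p).
Proof.
move=> r0; have sq0 : 0 < sqn (xpart p) by rewrite -sqrtr_gt0.
rewrite (_ : @rr R m n = Num.sqrt \o (fun y => sqn (xpart y))) //.
apply: is_diff_eq (is_diff_comp (is_diff_sqn (is_diff_xpart p)) (is_diff_sqrt sq0)) _.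
apply/funext => w /=; rewrite /dr -/(rr p).
by field; exact: lt0r_neq0.
Qed.

Lemma ffE p : ff p = (sqn (xpart p) - sqn (tpart p)) / 4.
Proof. by rewrite -rr_sqr -tau_sqr /ff /uu /vv; field. Qed.

Lemma is_diff_ff p : is_diff p (@ff R m n) (dff p).
Proof.
set X := fun y => sqn (@xpart R m n y); set T := fun y => sqn (@tpart R m n y).
rewrite (_ : @ff R m n = 4^-1 *: (X - T)); last first.
  by apply/funext => y; rewrite ffE mulrC.
apply: is_diff_eq (is_diffZ 4^-1 (is_diffB (is_diff_sqn (is_diff_xpart p))
                                           (is_diff_sqn (is_diff_tpart p)))) _.
apply/funext => w.
change (4^-1 * (2 * dotv (xpart p) (xpart w) - 2 * dotv (tpart p) (tpart w)) = dff p w).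
by rewrite dotv_xpart dotv_tpart rrE tauE drE dtauE /dff; field.
Qed.

Lemma continuous_ff : continuous (@ff R m n).
Proof. by move=> p; have [+ _] := is_diff_ff p; exact: differentiable_continuous. Qed.

End NullCoordinates.

Section RadialMaps.
Variables (R : realType) (m n : nat).
Local Notation V := 'rV[R]_(m + n).
Implicit Types (p w : V) (a b : R).

Definition radial a b p : V := row_mx (a *: tpart p) (b *: xpart p).

Definition dradial a b da db p w : V :=
  row_mx (da *: tpart p + a *: tpart w) (db *: xpart p + b *: xpart w).

Lemma tpart_radial a b p : tpart (radial a b p) = a *: tpart p.
Proof. exact: row_mxKl. Qed.

Lemma xpart_radial a b p : xpart (radial a b p) = b *: xpart p.
Proof. exact: row_mxKr. Qed.

Lemma tpart_dradial a b da db p w :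
  tpart (dradial a b da db p w) = da *: tpart p + a *: tpart w.
Proof. exact: row_mxKl. Qed.

Lemma xpart_dradial a b da db p w :
  xpart (dradial a b da db p w) = db *: xpart p + b *: xpart w.
Proof. exact: row_mxKr. Qed.

Lemma tau_radial a b p : 0 <= a -> tau (radial a b p) = a * tau p.
Proof.
by move=> a0; rewrite /tau tpart_radial sqnZ sqrtrM ?sqr_ge0 // sqrtr_sqr ger0_norm.
Qed.

Lemma rr_radial a b p : 0 <= b -> rr (radial a b p) = b * rr p.
Proof.
by move=> b0; rewrite /rr xpart_radial sqnZ sqrtrM ?sqr_ge0 // sqrtr_sqr ger0_norm.
Qed.

Lemma radialA a1 b1 a2 b2 p :
  radial a2 b2 (radial a1 b1 p) = radial (a2 * a1) (b2 * b1) p.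
Proof. by rewrite /radial tpart_radial xpart_radial !scalerA. Qed.

Lemma radial_fix a b p : 0 <= a -> 0 <= b -> 0 < rr p ->
  tau (radial a b p) = tau p -> rr (radial a b p) = rr p -> radial a b p = p.
Proof.
move=> a0 b0 r0; rewrite tau_radial // rr_radial // => ta rb.
have -> : b = 1 by apply: (mulIf (lt0r_neq0 r0)); rewrite rb mul1r.
rewrite /radial.
have -> : a *: tpart p = tpart p.
  have [t0|t0] := eqVneq (tau p) 0.
    by move/eqP: t0; rewrite tau_eq0 => /eqP ->; rewrite scaler0.
  suff -> : a = 1 by rewrite scale1r.
  by apply: (mulIf t0); rewrite ta mul1r.
by rewrite scale1r hsubmxK.
Qed.

Lemma is_diff_radial (A B dA dB : V -> R) p :
  is_diff p A dA -> is_diff p B dB ->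
  is_diff p (fun y => radial (A y) (B y) y) (fun w => dradial (A p) (B p) (dA w) (dB w) p w).
Proof.
move=> hA hB.
exact: is_diff_row_mx (is_diff_scalemx hA (is_diff_tpart p))
                      (is_diff_scalemx hB (is_diff_xpart p)).
Qed.

Section Variation.
Variables (a b : R) (p : V).
Hypotheses (a_gt0 : 0 < a) (b_gt0 : 0 < b) (rr_gt0 : 0 < rr p).

Lemma dtau_radial da db w :
  dtau (radial a b p) (dradial a b da db p w) = da * tau p + a * dtau p w.
Proof.
rewrite /dtau tau_radial ?ltW //; have [t0|t0] := eqVneq (tau p) 0.
  by rewrite t0 mulr0 eqxx !mulr0 addr0.
rewrite mulf_eq0 (negbTE t0) (gt_eqF a_gt0) tpart_radial tpart_dradial.
rewrite dotvZl dotvDr !dotvZr -/(sqn _) -tau_sqr (dotv_tpart p) /dtau (negbTE t0).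
by field; rewrite t0 gt_eqF.
Qed.

Lemma dr_radial da db w :
  dr (radial a b p) (dradial a b da db p w) = db * rr p + b * dr p w.
Proof.
rewrite /dr rr_radial ?ltW // xpart_radial xpart_dradial.
rewrite dotvZl dotvDr !dotvZr -/(sqn _) -rr_sqr (dotv_xpart p) /dr.
by field; rewrite !gt_eqF.
Qed.

Lemma gamma_x_radial da1 db1 da2 db2 w1 w2 :
  gamma_x (radial a b p) (dradial a b da1 db1 p w1) (dradial a b da2 db2 p w2) =
  gamma_x p w1 w2.
Proof.
rewrite /gamma_x !dr_radial rr_radial ?ltW // !xpart_dradial dotv_lincomb.
rewrite -rr_sqr !(dotv_xpart p).
by field; rewrite !gt_eqF.
Qed.

Lemma tau2_gamma_t_radial da1 db1 da2 db2 w1 w2 :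
  tau2_gamma_t (radial a b p) (dradial a b da1 db1 p w1) (dradial a b da2 db2 p w2) =
  a ^+ 2 * tau2_gamma_t p w1 w2.
Proof.
rewrite /tau2_gamma_t !dtau_radial !tpart_dradial dotv_lincomb.
by rewrite -tau_sqr !(dotv_tpart p); ring.
Qed.

End Variation.
End RadialMaps.

Section Phibar.
Variables (R : realType) (m n : nat).
Local Notation V := 'rV[R]_(m + n).
Implicit Types (p w : V) (e : R).

(* Since xi = (1 + e u) (1 - e v) and r - 2 e f = v (1 + e u) - u (1 - e v), these
   are the conditions under which Phibar e is the radial map with the positive
   factors tscale and xscale below. *)
Definition admissible e : set V := [set p |
  0 < 1 + e * uu p /\ 0 < 1 - e * vv p /\ 0 < rr p /\ 0 < rr p - 2 * e * ff p].

Definition tscale e p := (xi e p)^-1.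
Definition xscale e p := (rr p - 2 * e * ff p) / (xi e p * rr p).

Lemma xiE e p : xi e p = 1 - e * rr p + e ^+ 2 * ff p.
Proof. by rewrite /xi /ff rrE; ring. Qed.

Lemma admissible_small e p : Dom p -> `|e| * rr p <= 1/4 -> admissible e p.
Proof.
move=> /Dom_uv/andP[u0 v0] small; have t0 := tau_ge0 p.
rewrite /admissible /ff /= rrE; rewrite rrE in small; rewrite tauE in t0.
move: (uu p) (vv p) u0 v0 t0 small => u v u0 v0 t0 small.
(* Since 0 <= -u <= v <= r, we get |e u| <= 1/8 and |e v| <= 1/4. *)
have le_e : - `|e| <= e <= `|e| by rewrite -ler_norml.
have h1 : 0 <= `|e| * (u + v) by rewrite mulr_ge0.
have h2 : 0 <= - u * (`|e| - e) by rewrite mulr_ge0 ?subr_ge0 //; lra.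
have h3 : 0 <= v * (`|e| - e) by rewrite mulr_ge0 ?subr_ge0 //; lra.
have h4 : 0 <= `|e| * - u by rewrite mulr_ge0 //; lra.
have eu1 : 0 < 1 + e * u by lra.
have ev1 : 0 < 1 - e * v by lra.
split; [done|split; [done|split; first lra]].
have nu : 0 < - u by lra.
have := mulr_gt0 v0 eu1; have := mulr_gt0 nu ev1; lra.
Qed.

Section Admissible.
Variables (e : R) (p : V).
Hypothesis adm : admissible e p.

Let u1_gt0 : 0 < 1 + e * uu p. Proof. by case: adm. Qed.
Let v1_gt0 : 0 < 1 - e * vv p. Proof. by case: adm => _ []. Qed.
Let rr_gt0 : 0 < rr p. Proof. by case: adm => _ [_ []]. Qed.
Let N_gt0 : 0 < rr p - 2 * e * ff p. Proof. by case: adm => _ [_ []]. Qed.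

Lemma xi_gt0 : 0 < xi e p. Proof. exact: mulr_gt0. Qed.

Lemma tscale_gt0 : 0 < tscale e p. Proof. by rewrite invr_gt0 xi_gt0. Qed.

Lemma xscale_gt0 : 0 < xscale e p.
Proof. by rewrite divr_gt0 ?mulr_gt0 ?xi_gt0. Qed.

Lemma Phibar_radial : Phibar e p = radial (tscale e p) (xscale e p) p.
Proof.
rewrite /Phibar /radial /tscale /xscale /xi /ff; congr row_mx.
  have [t0|t0] := eqVneq (tau p) 0.
    by move/eqP: t0; rewrite tau_eq0 => /eqP ->; rewrite scaler0.
  congr (_ *: _); move: t0; rewrite tauE.
  move: (uu p) (vv p) u1_gt0 v1_gt0 => u v hu hv t0.
  by field; rewrite t0 !gt_eqF.
congr (_ *: _); have := rr_gt0; rewrite rrE.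
move: (uu p) (vv p) u1_gt0 v1_gt0 => u v hu hv r0.
by field; rewrite !gt_eqF.
Qed.

Lemma tau_Phibar : tau (Phibar e p) = (xi e p)^-1 * tau p.
Proof. by rewrite Phibar_radial tau_radial // ltW ?tscale_gt0. Qed.

Lemma rr_Phibar : rr (Phibar e p) = (rr p - 2 * e * ff p) / xi e p.
Proof.
rewrite Phibar_radial rr_radial ?ltW ?xscale_gt0 // /xscale.
by field; rewrite !gt_eqF ?xi_gt0.
Qed.

Lemma uu_Phibar : uu (Phibar e p) = uu p / (1 + e * uu p).
Proof.
rewrite {1}/uu tau_Phibar rr_Phibar tauE rrE /xi /ff.
by move: (uu p) (vv p) u1_gt0 v1_gt0 => u v hu hv; field; rewrite !gt_eqF.
Qed.

Lemma vv_Phibar : vv (Phibar e p) = vv p / (1 - e * vv p).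
Proof.
rewrite {1}/vv tau_Phibar rr_Phibar tauE rrE /xi /ff.
by move: (uu p) (vv p) u1_gt0 v1_gt0 => u v hu hv; field; rewrite !gt_eqF.
Qed.

Lemma ff_Phibar : ff (Phibar e p) = (xi e p)^-1 * ff p.
Proof.
rewrite {1}/ff uu_Phibar vv_Phibar /ff /xi.
by move: (uu p) (vv p) u1_gt0 v1_gt0 => u v hu hv; field; rewrite !gt_eqF.
Qed.

Lemma rhobar_Phibar : rhobar e (Phibar e p) = (xi e p)^-1 * rr p.
Proof.
by rewrite /rhobar rr_Phibar ff_Phibar; field; rewrite gt_eqF ?xi_gt0.
Qed.

Lemma Dom_Phibar : Dom p -> Dom (Phibar e p).
Proof. by rewrite /Dom /= ff_Phibar => f0; rewrite mulr_gt0 // invr_gt0 xi_gt0. Qed.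

Lemma denom_uu_Phibar : 1 + - e * uu (Phibar e p) = (1 + e * uu p)^-1.
Proof. by rewrite uu_Phibar; field; rewrite gt_eqF. Qed.

Lemma denom_vv_Phibar : 1 - - e * vv (Phibar e p) = (1 - e * vv p)^-1.
Proof. by rewrite vv_Phibar; field; rewrite gt_eqF. Qed.

Lemma admissible_Phibar : admissible (- e) (Phibar e p).
Proof.
have e3 : rr (Phibar e p) - 2 * - e * ff (Phibar e p) = rhobar e (Phibar e p).
  by rewrite /rhobar; ring.
rewrite /admissible /= denom_uu_Phibar denom_vv_Phibar e3 rhobar_Phibar rr_Phibar !invr_gt0.
by rewrite u1_gt0 v1_gt0 divr_gt0 ?mulr_gt0 ?invr_gt0 ?xi_gt0.
Qed.

End Admissible.

Lemma PhibarK e p : admissible e p -> Phibar (- e) (Phibar e p) = p.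
Proof.
move=> adm; have admK := admissible_Phibar adm.
have [u1_gt0 [v1_gt0 [rr_gt0 _]]] := adm.
have uK : uu (Phibar (- e) (Phibar e p)) = uu p.
  rewrite (uu_Phibar admK) (denom_uu_Phibar adm) (uu_Phibar adm).
  by field; rewrite gt_eqF.
have vK : vv (Phibar (- e) (Phibar e p)) = vv p.
  rewrite (vv_Phibar admK) (denom_vv_Phibar adm) (vv_Phibar adm).
  by field; rewrite gt_eqF.
move: (tauE (Phibar (- e) (Phibar e p))) (rrE (Phibar (- e) (Phibar e p))).
rewrite uK vK -tauE -rrE.
have -> : Phibar (- e) (Phibar e p) = radial (tscale (- e) (Phibar e p) * tscale e p)
                                        (xscale (- e) (Phibar e p) * xscale e p) p.
  by rewrite (Phibar_radial admK) -radialA -(Phibar_radial adm).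
by apply: radial_fix => //; rewrite mulr_ge0 ?ltW ?tscale_gt0 ?xscale_gt0.
Qed.

End Phibar.

Section PhibarDifferential.
Variables (R : realType) (m n : nat).
Local Notation V := 'rV[R]_(m + n).
Implicit Types (p w : V) (e : R).

Definition dxi e p w := e * (du p w * (1 - e * vv p) - (1 + e * uu p) * dv p w).
Definition dtscale e p w := - dxi e p w / xi e p ^+ 2.
Definition dxscale e p w :=
  ((dr p w - 2 * e * dff p w) * (xi e p * rr p)
   - (rr p - 2 * e * ff p) * (xi e p * dr p w + rr p * dxi e p w)) / (xi e p * rr p) ^+ 2.
Definition dPhibar e p w : V :=
  dradial (tscale e p) (xscale e p) (dtscale e p w) (dxscale e p w) p w.

Lemma is_diff_xi e p : 0 < rr p -> is_diff p (xi e) (dxi e p).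
Proof.
move=> r0; rewrite (_ : xi e = fun y => 1 - e * rr y + e ^+ 2 * ff y); last first.
  by apply/funext => y; rewrite xiE.
have H : is_diff p (fun y => 1 - e * rr y + e ^+ 2 * ff y)
                   (fun w => 0 - e * dr p w + e ^+ 2 * dff p w) :=
  is_diffD (is_diffB (is_diff_cst (1 : R) p) (is_diffZ e (is_diff_rr r0)))
           (is_diffZ (e ^+ 2) (is_diff_ff p)).
by apply: is_diff_eq H _; apply/funext => w; rewrite drE /dff /dxi; ring.
Qed.

Lemma is_diff_tscale e p : 0 < rr p -> xi e p != 0 -> is_diff p (tscale e) (dtscale e p).
Proof.
move=> r0 x0; have H : is_diff p (tscale e) (fun w => - (xi e p ^- 2) * dxi e p w) :=
  is_diffV (is_diff_xi e r0) x0.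
by apply: is_diff_eq H _; apply/funext => w; rewrite /dtscale; field.
Qed.

Lemma is_diff_xscale e p : 0 < rr p -> xi e p != 0 -> is_diff p (xscale e) (dxscale e p).
Proof.
move=> r0 x0.
have N : is_diff p (fun y => rr y - 2 * e * ff y) (fun w => dr p w - 2 * e * dff p w) :=
  is_diffB (is_diff_rr r0) (is_diffZ (2 * e) (is_diff_ff p)).
have D : is_diff p (fun y => xi e y * rr y) (fun w => xi e p * dr p w + rr p * dxi e p w) :=
  is_diffM (is_diff_xi e r0) (is_diff_rr r0).
exact: is_diff_div N D (mulf_neq0 x0 (lt0r_neq0 r0)).
Qed.

Lemma open_admissible e : open (@admissible R m n e).
Proof.
have c1 x : {for x, continuous (fun p : V => 1 + e * uu p)}.
  have := continuousD (@cst_continuous V R 1 x)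
    (continuousM (@cst_continuous V R e x) (@continuous_uu R m n x)); exact.
have c2 x : {for x, continuous (fun p : V => 1 - e * vv p)}.
  have := continuousB (@cst_continuous V R 1 x)
    (continuousM (@cst_continuous V R e x) (@continuous_vv R m n x)); exact.
have c3 x : {for x, continuous (fun p : V => rr p - 2 * e * ff p)}.
  have := continuousB (@continuous_rr R m n x)
    (continuousM (@cst_continuous V R (2 * e) x) (@continuous_ff R m n x)); exact.
by do 3?apply: openI; apply: open_pos => //; exact: continuous_rr.
Qed.

Lemma is_diff_Phibar e p : admissible e p -> is_diff p (Phibar e) (dPhibar e p).
Proof.
move=> adm; have [_ [_ [r0 _]]] := adm.
have x0 : xi e p != 0 by rewrite gt_eqF ?xi_gt0.
have near_adm : \forall y \near p, admissible e y.
  by apply: open_nbhs_nbhs; split; [exact: open_admissible | exact: adm].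
apply: near_eq_is_diff (filterS (@Phibar_radial R m n e) near_adm) _.
exact: is_diff_radial (is_diff_tscale r0 x0) (is_diff_xscale r0 x0).
Qed.

End PhibarDifferential.

Section Metric.
Variables (R : realType) (m n : nat).
Local Notation V := 'rV[R]_(m + n).
Implicit Types (p w : V) (e : R).

Lemma gbar0_gmink p w1 w2 : 0 < rr p -> gbar 0 p w1 w2 = gmink p w1 w2.
Proof.
move=> r0; rewrite /gbar /rhobar /gamma_x /tau2_gamma_t /gmink /du /dv.
rewrite mulr0 mul0r addr0; field; exact: lt0r_neq0.
Qed.

Section Pullback.
Variables (e : R) (p : V).
Hypothesis adm : admissible e p.

Lemma du_Phibar w : du (Phibar e p) (dPhibar e p w) = du p w / (1 + e * uu p) ^+ 2.
Proof.
have [hu [hv [r0 _]]] := adm.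
rewrite /du (Phibar_radial adm) dtau_radial ?dr_radial ?tscale_gt0 ?xscale_gt0 //.
rewrite /dtscale /dxscale /dxi /tscale /xscale /dff /xi /ff tauE rrE dtauE drE.
rewrite rrE in r0; move: (uu p) (vv p) (du p w) (dv p w) hu hv r0 => u v a b *.
by field; rewrite !gt_eqF.
Qed.

Lemma dv_Phibar w : dv (Phibar e p) (dPhibar e p w) = dv p w / (1 - e * vv p) ^+ 2.
Proof.
have [hu [hv [r0 _]]] := adm.
rewrite /dv (Phibar_radial adm) dtau_radial ?dr_radial ?tscale_gt0 ?xscale_gt0 //.
rewrite /dtscale /dxscale /dxi /tscale /xscale /dff /xi /ff tauE rrE dtauE drE.
rewrite rrE in r0; move: (uu p) (vv p) (du p w) (dv p w) hu hv r0 => u v a b *.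
by field; rewrite !gt_eqF.
Qed.

Lemma gbar_Phibar w1 w2 :
  gbar e (Phibar e p) (dPhibar e p w1) (dPhibar e p w2) = (xi e p) ^- 2 * gbar 0 p w1 w2.
Proof.
have [hu [hv [r0 _]]] := adm.
rewrite {1}/gbar !du_Phibar !dv_Phibar (rhobar_Phibar adm) (Phibar_radial adm) /dPhibar.
rewrite gamma_x_radial ?tau2_gamma_t_radial ?tscale_gt0 ?xscale_gt0 //.
rewrite /gbar /rhobar /tscale /xi mulr0 mul0r addr0.
by field; rewrite !gt_eqF.
Qed.

End Pullback.
End Metric.

Section Image.
Variables (R : realType) (m n : nat).
Local Notation V := 'rV[R]_(m + n).

Lemma Phibar_image e (S : set V) : S `<=` admissible e ->
  Phibar e @` S = admissible (- e) `&` Phibar (- e) @^-1` S.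
Proof.
move=> SA; apply/seteqP; split => [q [p Sp <-]|q [aq Sq]].
  by split; [exact: admissible_Phibar (SA p Sp) | rewrite /= PhibarK //; exact: SA].
by exists (Phibar (- e) q) => //; have := PhibarK aq; rewrite opprK.
Qed.

Lemma open_Phibar_image e (S : set V) : open S -> S `<=` admissible e ->
  open (Phibar e @` S).
Proof.
move=> oS SA; rewrite Phibar_image //.
apply: open_setI_preimage oS _; first exact: open_admissible.
by move=> q; rewrite inE => /is_diff_Phibar[+ _]; exact: differentiable_continuous.
Qed.

Lemma open_Dom_ball (Rad : R) : open [set p : V | Dom p /\ rr p < Rad].
Proof.
apply: openI; first exact/open_pos/continuous_ff.
have c := @continuous_rr R m n.
by have := @open_comp _ _ (@rr R m n) _ (fun p _ => c p) (@open_lt R Rad).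
Qed.

End Image.

Theorem proposition3p8 (R : realType) (m n : nat) :
  exists c : R, 0 < c /\
  forall (Rad eps : R), 0 < Rad -> `|eps| <= c / Rad ->
  let S := [set p : 'rV[R]_(m + n) | Dom p /\ rr p < Rad] in
  (forall p, S p -> Dom (Phibar eps p)) /\
  (forall p, S p -> tau (Phibar eps p) = (xi eps p)^-1 * tau p) /\
  (forall p, S p -> ff (Phibar eps p) = (xi eps p)^-1 * ff p) /\
  (forall p, S p -> rhobar eps (Phibar eps p) = (xi eps p)^-1 * rr p) /\
  (forall p q, S p -> S q -> Phibar eps p = Phibar eps q -> p = q) /\
  open (Phibar eps @` S) /\
  (forall p, S p -> differentiable (Phibar eps) p) /\
  (forall p w1 w2, S p ->
     gbar eps (Phibar eps p) ('d (Phibar eps) p w1) ('d (Phibar eps) p w2)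
     = (xi eps p) ^- 2 * gmink p w1 w2).
Proof.
exists (1/4); split=> [|Rad eps Rad0 small S]; first lra.
have adm : S `<=` admissible eps.
  move=> p [Dp rp]; apply: admissible_small Dp _.
  apply: le_trans (ler_wpM2l (normr_ge0 eps) (ltW rp)) _.
  by rewrite -ler_pdivlMr.
split; first by move=> p Sp; exact: Dom_Phibar (adm p Sp) Sp.1.
split; first by move=> p /adm; exact: tau_Phibar.
split; first by move=> p /adm; exact: ff_Phibar.
split; first by move=> p /adm; exact: rhobar_Phibar.
split.
  by move=> p q /adm/PhibarK Kp /adm/PhibarK Kq E; rewrite -Kp E Kq.
split; first exact: open_Phibar_image (@open_Dom_ball R m n Rad) adm.
split; first by move=> p /adm/is_diff_Phibar[].
move=> p w1 w2 /adm admp; have [_ ->] := is_diff_Phibar admp.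
by rewrite gbar_Phibar // gbar0_gmink //; case: admp => _ [_ []].
Qed.
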